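(* Let $n,r\ge1$, $\lambda\in\Lambda_\vartriangle(n,r)$ and $d\in\mathscr D^\vartriangle_\lambda$, and let $\mathbf i=\mathbf i_\lambda d$. If $d^+$ denotes the element of maximal length in the coset $\mathfrak S_\lambda d$, then $|\mathrm{Inv}(\mathbf i)|=\ell(d^+)$, where $\mathrm{Inv}(\mathbf i)=\{(s,t)\in\mathbb Z^2\mid 1\le s\le r,\ s<t,\ i_s\ge i_t\}$.
   Context: The affine symmetric group $\mathfrak S_{\vartriangle,r}$ is the group (under composition) of bijections $w:\mathbb Z\to\mathbb Z$ with $w(i+r)=w(i)+r$. It contains $s_i$ ($1\le i\le r$): $s_i(j)=j$ if $j\not\equiv i,i+1\pmod r$, $s_i(j)=j-1$ if $j\equiv i+1$, $s_i(j)=j+1$ if $j\equiv i$; and $\rho:j\mapsto j+1$. The $s_i$ generate a Coxeter group $W$ with length function $\ell$, every element is uniquely $\rho^aw'$ ($w'\in W$), and one sets $\ell(\rho^aw')=\ell(w')$. $\Lambda_\vartriangle(n,r)$ is the set of $\lambda=(\lambda_i)_{i\in\mathbb Z}$ with $\lambda_i\in\mathbb N$, $\lambda_{i+n}=\lambda_i$, $\lambda_1+\dots+\lambda_n=r$. For $1\le i\le n$, $k\in\mathbb Z$ put $\lambda_{k,i-1}=kr+\sum_{t=1}^{i-1}\lambda_t$ and $R^\lambda_{i+kn}=\{\lambda_{k,i-1}+1,\dots,\lambda_{k,i-1}+\lambda_i\}$. $\mathfrak S_\lambda$ is the standard Young subgroup $\mathfrak S_{(\lambda_1,\dots,\lambda_n)}$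 of $\mathfrak S_r$, viewed in $\mathfrak S_{\vartriangle,r}$ by periodic extension, and $\mathscr D^\vartriangle_\lambda=\{d\mid \ell(wd)=\ell(w)+\ell(d)\ \forall w\in\mathfrak S_\lambda\}$. Let $I_\vartriangle(n,r)$ be the set of integer sequences $\mathbf i=(i_k)_{k\in\mathbb Z}$ with $i_{k+r}=i_k+n$; $\mathfrak S_{\vartriangle,r}$ acts on it on the right by $(\mathbf iw)_k=i_{w(k)}$. $\mathbf i_\lambda\in I_\vartriangle(n,r)$ is the sequence with $(\mathbf i_\lambda)_s=m$ for all $s\in R^\lambda_m$, $m\in\mathbb Z$. *)

From HB Require Import structures.
From mathcomp Require Import all_boot all_order all_algebra.
From Stdlib Require Import ClassicalEpsilon.
Set Implicit Arguments. Unset Strict Implicit. Unset Printing Implicit Defensive.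
Import Order.TTheory GRing.Theory Num.Theory.
Local Open Scope ring_scope.

Definition affine_perm (r : nat) (w : int -> int) : Prop :=
  bijective w /\ forall i : int, w (i + r%:Z) = w i + r%:Z.

Definition s_gen (r : nat) (i : nat) (j : int) : int :=
  if ((j - i%:Z - 1) %% r%:Z)%Z == 0 then j - 1
  else if ((j - i%:Z) %% r%:Z)%Z == 0 then j + 1
  else j.

Definition word (r : nat) (js : seq nat) : int -> int :=
  foldr (fun i f => s_gen r i \o f) id js.

(* w = rho^a o s_{j_1} o ... o s_{j_k} for some a and some word of length k *)
Definition has_word_of_length (r : nat) (w : int -> int) (k : nat) : Prop :=
  exists (a : int) (js : seq nat),
    size js = k /\ all (fun i => (1 <= i <= r)%N) js /\
    forall x, w x = word r js x + a.

(* Coxeter length: l(rho^a w') = l(w') = minimal number of generators s_i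
   in an expression of w' (since rho^a w' is unique, this equals the minimal
   k with w = rho^a s_{j1} ... s_{jk}). *)
Definition ell (r : nat) (w : int -> int) : nat :=
  epsilon (inhabits 0%N)
    (fun k => has_word_of_length r w k /\
              forall k', has_word_of_length r w k' -> (k <= k')%N).

Definition in_Lambda (n r : nat) (lam : int -> nat) : Prop :=
  (forall i : int, lam (i + n%:Z) = lam i) /\
  (\sum_(1 <= t < n.+1) lam t%:Z)%N = r.

(* s \in R^lambda_m, where R^lambda_{i + k n} =
   { lambda_{k,i-1} + 1, ..., lambda_{k,i-1} + lambda_i },
   lambda_{k,i-1} = k r + sum_{t=1}^{i-1} lambda_t  (1 <= i <= n, k in Z) *)
Definition inR (n r : nat) (lam : int -> nat) (m s : int) : Prop :=
  exists (k : int) (i : nat),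
    (1 <= i <= n)%N /\ m = i%:Z + k * n%:Z /\
    k * r%:Z + (\sum_(1 <= t < i) lam t%:Z)%N%:Z < s /\
    s <= k * r%:Z + (\sum_(1 <= t < i) lam t%:Z)%N%:Z + (lam i%:Z)%:Z.

Definition is_ilambda (n r : nat) (lam : int -> nat) (ilam : int -> int) : Prop :=
  forall m s : int, inR n r lam m s -> ilam s = m.

Definition in_Young (n r : nat) (lam : int -> nat) (w : int -> int) : Prop :=
  affine_perm r w /\
  forall (i : nat) (s : int), (1 <= i <= n)%N ->
    inR n r lam i%:Z s -> inR n r lam i%:Z (w s).

Definition in_D (n r : nat) (lam : int -> nat) (d : int -> int) : Prop :=
  affine_perm r d /\
  forall w, in_Young n r lam w -> ell r (w \o d) = (ell r w + ell r d)%N.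

Definition coset_max (n r : nat) (lam : int -> nat) (d dp : int -> int) : Prop :=
  (exists w, in_Young n r lam w /\ forall x, dp x = w (d x)) /\
  forall w, in_Young n r lam w -> (ell r (w \o d) <= ell r dp)%N.

Definition Inv (r : nat) (i : int -> int) (p : int * int) : Prop :=
  1 <= p.1 <= r%:Z /\ p.1 < p.2 /\ i p.2 <= i p.1.

Definition has_card (P : int * int -> Prop) (c : nat) : Prop :=
  exists s : seq (int * int), uniq s /\ (forall p, p \in s <-> P p) /\ size s = c.

From mathcomp Require Import all_boot all_order all_algebra.
From mathcomp Require Import zify ring.
From Stdlib Require Import ClassicalEpsilon FunctionalExtensionality.
Set Implicit Arguments. Unset Strict Implicit. Unset Printing Implicit Defensive.
Import Order.TTheory GRing.Theory Num.Theory.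
Local Open Scope ring_scope.

(** The Coxeter length of an affine permutation w equals its number of
    inversions, the pairs (s, t) with 1 <= s <= r, s < t and w t < w s: left
    multiplication by a generator s_a changes this number by exactly one, and an
    affine permutation without inversions is a power of rho.

    The sequence i_lambda is nondecreasing, is constant exactly on the blocks
    R^lambda_m, and these blocks are permuted by the elements of S_lambda.  As d
    is the shortest element of its coset, d^-1 is increasing on every block;
    otherwise s_a d would be shorter than d for a generator s_a of S_lambda.
    Let w_lambda reverse every block.  Then the inversions of w_lambda d are
    exactly the pairs (s, t) with i_s >= i_t, and every inversion of an element
    w d of the coset is such a pair.  Hence w_lambda d is longest in the
    coset. *)

(** * Periodic functions and the generators *)

Lemma shift_mulz (f : int -> int) (p q : int) :
  (forall x, f (x + p) = f x + q) -> forall x k, f (x + k * p) = f x + k * q.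
Proof.
move=> fS.
have fSn x (m : nat) : f (x + m%:Z * p) = f x + m%:Z * q.
  elim: m => [|m IH]; first by rewrite !mul0r !addr0.
  have -> : x + m.+1%:Z * p = x + m%:Z * p + p by lia.
  by rewrite fS IH; lia.
move=> x [m|m]; first exact: fSn.
have := fSn (x + Negz m * p) m.+1.
have -> : x + Negz m * p + m.+1%:Z * p = x by rewrite NegzE; lia.
by rewrite NegzE; lia.
Qed.

Lemma chain_ltz (T : Type) (R : rel T) (f : int -> T) (x y : int) :
  transitive R -> (forall z, x <= z < y -> R (f z) (f (z + 1))) -> x < y ->
  R (f x) (f y).
Proof.
move=> trR fR lt_xy; have -> : y = x + (`|(y - x - 1)%R|%N.+1)%:Z by lia.
have : x + `|(y - x - 1)%R|%N%:Z < y by lia.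
elim: `|(y - x - 1)%R|%N => [|m IH] lt_my; first by apply: fR; lia.
apply: trR (IH _) _; first by lia.
have -> : x + m.+2%:Z = x + m.+1%:Z + 1 by lia.
by apply: fR; lia.
Qed.

Lemma residue_decomp (r : nat) (x : int) : (0 < r)%N ->
  exists (k : int) (s : nat), x = s%:Z + k * r%:Z /\ (1 <= s <= r)%N.
Proof.
move=> r_gt0; exists ((x - 1) %/ r%:Z)%Z, `|((x - 1) %% r%:Z)%Z|%N.+1.
have r0 : 0 < r%:Z by lia.
have := divz_eq (x - 1) r%:Z; have := ltz_pmod (x - 1) r0.
have := modz_ge0 (x - 1) (lt0r_neq0 r0).
move: ((x - 1) %/ r%:Z)%Z ((x - 1) %% r%:Z)%Z => q m; lia.
Qed.

Lemma eqz_mod_window (r : nat) (x y : int) : 1 <= x <= r%:Z -> 1 <= y <= r%:Z ->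
  (x == y %[mod r%:Z])%Z = (x == y).
Proof.
move=> xP yP; rewrite -(eqz_modDr (-1)) !modz_small; first exact: (can_eq (addrNK 1)).
all: lia.
Qed.

Definition periodic (r : nat) (f : int -> int) := forall x, f (x + r%:Z) = f x + r%:Z.

Section Periodic.
Variable r : nat.

Lemma periodic_mulz f : periodic r f -> forall x k, f (x + k * r%:Z) = f x + k * r%:Z.
Proof. exact: shift_mulz. Qed.

Lemma periodic_comp f g : periodic r f -> periodic r g -> periodic r (f \o g).
Proof. by move=> fP gP x /=; rewrite gP fP. Qed.

Lemma periodic_can f g : periodic r f -> cancel f g -> cancel g f -> periodic r g.
Proof. by move=> fP fK gK y; rewrite -{1}(gK y) -fP fK. Qed.

Lemma periodic_eqz_mod f g x y : periodic r f -> cancel f g -> cancel g f ->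
  (f x == y %[mod r%:Z])%Z = (x == g y %[mod r%:Z])%Z.
Proof.
move=> fP fK gK; have gP := periodic_can fP fK gK.
rewrite !eqz_mod_dvd; apply/dvdzP/dvdzP => -[k e]; exists k.
  have -> : x = g (y + k * r%:Z) by rewrite -(fK x); congr g; lia.
  by rewrite periodic_mulz //; ring.
have -> : x = g y + k * r%:Z by lia.
by rewrite periodic_mulz // gK; ring.
Qed.

End Periodic.

Lemma affine_perm_comp r f g : affine_perm r f -> affine_perm r g -> affine_perm r (f \o g).
Proof. by move=> [fb fP] [gb gP]; split; [exact: bij_comp | exact: periodic_comp]. Qed.

Lemma sgenE r a x : s_gen r a x =
  if (x - 1 == a%:Z %[mod r%:Z])%Z then x - 1
  else if (x == a%:Z %[mod r%:Z])%Z then x + 1 else x.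
Proof. by rewrite /s_gen !eqz_mod_dvd -!(sameP eqP dvdz_mod0P) addrAC. Qed.

Lemma sgen_periodic r a : periodic r (s_gen r a).
Proof.
move=> x; rewrite !sgenE addrAC !modzDr.
by case: ifP => _; [|case: ifP => _]; ring.
Qed.

Lemma sgen1 a x : s_gen 1 a x = x - 1.
Proof. by rewrite sgenE !modz1. Qed.

Lemma sgen_shift r a c : (0 < r)%N ->
  exists2 b : nat, (1 <= b <= r)%N & forall y, s_gen r a (y + c) = s_gen r b y + c.
Proof.
move=> r_gt0; have [k [b [acE bP]]] := residue_decomp (a%:Z - c) r_gt0.
exists b => // y; rewrite !sgenE.
have cE z : (z + c == a%:Z %[mod r%:Z])%Z = (z == b%:Z %[mod r%:Z])%Z.
  by rewrite -(eqz_modDr (- c)) addrK acE (addrC b%:Z) modzMDl.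
rewrite addrAC !cE.
by case: ifP => _; [|case: ifP => _]; ring.
Qed.

Section Generator.
Variables (r a : nat).
Hypothesis r_ge2 : (2 <= r)%N.

Lemma eqz_mod_succF x : (x == a%:Z %[mod r%:Z])%Z -> (x + 1 == a%:Z %[mod r%:Z])%Z = false.
Proof.
move=> /eqP xa; apply/negbTE; rewrite -xa -{2}[x]addr0 eqz_modDl.
by rewrite !modz_small //; lia.
Qed.

Lemma sgen_up x : (x == a%:Z %[mod r%:Z])%Z -> s_gen r a x = x + 1.
Proof.
move=> xa; rewrite sgenE xa; case: ifP => // x1a.
by move: (eqz_mod_succF x1a); rewrite subrK xa.
Qed.

Lemma sgen_down x : (x - 1 == a%:Z %[mod r%:Z])%Z -> s_gen r a x = x - 1.
Proof. by move=> x1a; rewrite sgenE x1a. Qed.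

Lemma sgen_fix x : ~~ (x - 1 == a%:Z %[mod r%:Z])%Z -> ~~ (x == a%:Z %[mod r%:Z])%Z ->
  s_gen r a x = x.
Proof. by move=> /negbTE x1a /negbTE xa; rewrite sgenE x1a xa. Qed.

Lemma sgen_involutive : involutive (s_gen r a).
Proof.
move=> x; case: (boolP (x == a%:Z %[mod r%:Z])%Z) => xa.
  by rewrite (sgen_up xa) sgen_down ?addrK.
case: (boolP (x - 1 == a%:Z %[mod r%:Z])%Z) => x1a.
  by rewrite (sgen_down x1a) sgen_up ?subrK.
by rewrite !sgen_fix.
Qed.

Lemma sgen_ltE u v : (s_gen r a v < s_gen r a u) =
  if (v == a%:Z %[mod r%:Z])%Z && (u == v + 1) then false
  else if (u == a%:Z %[mod r%:Z])%Z && (v == u + 1) then true else v < u.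
Proof.
have near x : x - 1 <= s_gen r a x <= x + 1.
  by rewrite sgenE; case: ifP => _; [|case: ifP => _]; lia.
have not_up x : ~~ (x == a%:Z %[mod r%:Z])%Z -> s_gen r a x <= x.
  by move=> /negbTE xa; rewrite sgenE xa; case: ifP => _; lia.
have not_down x : ~~ (x - 1 == a%:Z %[mod r%:Z])%Z -> x <= s_gen r a x.
  by move=> /negbTE x1a; rewrite sgenE x1a; case: ifP => _; lia.
have swap x : (x == a%:Z %[mod r%:Z])%Z -> s_gen r a (x + 1) < s_gen r a x.
  by move=> xa; rewrite (sgen_up xa) (@sgen_down (x + 1)) ?addrK //; lia.
have keep x : ~~ (x == a%:Z %[mod r%:Z])%Z -> s_gen r a x < s_gen r a (x + 1).
  move=> xa; have := not_up _ xa; have := not_down (x + 1); rewrite addrK xa; lia.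
case: (ltgtP u v) => [lt_uv|lt_vu|->].
- have -> : (u == v + 1) = false by lia.
  rewrite andbF /=; have [->|ne] := eqVneq v (u + 1); last first.
    by rewrite andbF; have := near u; have := near v; lia.
  rewrite andbT; case: (boolP (u == _ %[mod _])%Z) => ua; first exact: swap.
  by apply/negbTE; rewrite -leNgt; apply/ltW/keep.
- have -> : (v == u + 1) = false by lia.
  rewrite andbF /=; have [->|ne] := eqVneq u (v + 1).
    rewrite andbT; case: (boolP (v == _ %[mod _])%Z) => va; last exact: keep.
    by apply/negbTE; rewrite -leNgt; apply/ltW/swap.
  rewrite andbF; have [->|ne2] := eqVneq u (v + 2); last first.
    by have := near u; have := near v; lia.
  case: (boolP (v == a%:Z %[mod r%:Z])%Z) => va; last first.
    by have := not_up _ va; have := near (v + 2); lia.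
  have := not_down (v + 2); have -> : v + 2 - 1 = v + 1 by ring.
  by rewrite eqz_mod_succF // => /(_ isT); have := near v; lia.
- by rewrite ltxx (_ : (v == v + 1) = false) ?andbF //; lia.
Qed.

End Generator.

Lemma sgen_bij r a : (0 < r)%N -> bijective (s_gen r a).
Proof.
move=> r_gt0; have [r_ge2|] := leqP 2 r; first exact/inv_bij/sgen_involutive.
rewrite ltnS => r_le1; have -> : r = 1%N by apply/eqP; rewrite eqn_leq r_le1.
by exists (fun x => x + 1) => x; rewrite sgen1 ?subrK ?addrK.
Qed.

(** * Inversions *)

Definition inversion (r : nat) (f : int -> int) (p : int * int) : bool :=
  [&& 1 <= p.1 <= r%:Z, p.1 < p.2 & f p.2 < f p.1].

Definition window (r B : nat) : seq (int * int) :=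
  [seq (s%:Z, s%:Z + j%:Z) | s <- iota 1 r, j <- iota 1 B].

(* An inversion (s, t) has t - s <= 2 * displacement r f, so the window of
   that width used by [ninv] contains all of them. *)
Definition displacement (r : nat) (f : int -> int) : nat :=
  \max_(s < r) `|f s.+1%:Z - s.+1%:Z|%N.

Definition inversions (r : nat) (f : int -> int) (B : nat) : seq (int * int) :=
  [seq p <- window r B | f p.2 < f p.1].

Definition ninv (r : nat) (f : int -> int) : nat :=
  size (inversions r f (2 * displacement r f)).

Section Inversions.
Variable r : nat.
Hypothesis r_gt0 : (0 < r)%N.

Lemma mem_window B p : (p \in window r B) = (1 <= p.1 <= r%:Z) && (p.1 < p.2 <= p.1 + B%:Z).
Proof.
apply/allpairsP/idP => [[[s j] /= [+ + ->]]|].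
  by rewrite !mem_iota /=; lia.
case: p => x y /= xyP; exists (`|x|%N, `|y - x|%N) => /=.
by rewrite !mem_iota; split; [lia | lia | congr pair; lia].
Qed.

Lemma uniq_inversions f B : uniq (inversions r f B).
Proof.
apply/filter_uniq/allpairs_uniq; try exact: iota_uniq.
by move=> [s j] [s' j'] _ _ /= [-> ?]; congr pair; lia.
Qed.

Lemma displacement_bound f x : periodic r f -> (`|f x - x|%N <= displacement r f)%N.
Proof.
move=> fP; have [k [s [-> sP]]] := residue_decomp x r_gt0; rewrite periodic_mulz //.
have -> : f s%:Z + k * r%:Z - (s%:Z + k * r%:Z) = f s%:Z - s%:Z by ring.
have s_lt : (s.-1 < r)%N by lia.
have := @leq_bigmax _ (fun i : 'I_r => `|f i.+1%:Z - i.+1%:Z|%N) (Ordinal s_lt).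
by rewrite /= prednK //; case/andP: sP.
Qed.

Lemma mem_inversions f B p : periodic r f -> (2 * displacement r f <= B)%N ->
  (p \in inversions r f B) = inversion r f p.
Proof.
move=> fP fB; case: p => s t; rewrite mem_filter mem_window /inversion /=.
have := displacement_bound s fP; have := displacement_bound t fP.
by case: (boolP (f t < f s)) => ?; rewrite ?andbF ?andbT //= => *; apply/idP/idP; lia.
Qed.

Lemma has_card_inversion f : periodic r f -> has_card (inversion r f) (ninv r f).
Proof.
move=> fP; exists (inversions r f (2 * displacement r f)).
by split; [exact: uniq_inversions | split=> // p; rewrite mem_inversions].
Qed.

Lemma ninv_sub f g : periodic r f -> periodic r g ->
  (forall p, inversion r f p -> inversion r g p) -> (ninv r f <= ninv r g)%N.
Proof.
move=> fP gP fg; apply: uniq_leq_size; first exact: uniq_inversions.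
by move=> p; rewrite !mem_inversions //; apply: fg.
Qed.

Lemma eq_ninv f g : periodic r f -> periodic r g ->
  (forall x y, (f x < f y) = (g x < g y)) -> ninv r f = ninv r g.
Proof.
move=> fP gP fg; apply/eqP; rewrite eqn_leq.
by apply/andP; split; apply: ninv_sub => // p; rewrite /inversion fg.
Qed.

Lemma ninv_eq0 f : periodic r f -> injective f ->
  ninv r f = 0%N <-> {homo f : x y / x < y}.
Proof.
move=> fP f_inj; split => [f0 x y lt_xy|f_incr].
  have [k [s [xE sP]]] := residue_decomp x r_gt0.
  rewrite xE -(subrK (k * r%:Z) y) !periodic_mulz // ltrD2r.
  case: ltgtP => // [fts|/f_inj ts]; last by lia.
  have : inversion r f (s%:Z, y - k * r%:Z) by rewrite /inversion /= fts andbT; lia.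
  by rewrite -(@mem_inversions _ (2 * displacement r f)) // (size0nil f0).
rewrite /ninv /inversions (@eq_in_filter _ _ pred0) ?filter_pred0 //.
case=> s t; rewrite mem_window /= => /andP [_ /andP [lt_st _]].
by apply/negbTE; rewrite -leNgt ltW // f_incr.
Qed.

End Inversions.

(** * Length equals number of inversions *)

Section GeneratorInversions.
Variables (r a : nat) (w g : int -> int).
Hypotheses (r_ge2 : (2 <= r)%N) (wP : periodic r w) (wK : cancel w g) (gK : cancel g w).
Local Notation gap := (g (a%:Z + 1) - g a%:Z).

Let r_gt0 : (0 < r)%N. Proof. exact: ltnW. Qed.
Let gP : periodic r g. Proof. exact: periodic_can wK gK. Qed.

Lemma swapped_pairE s t :
  (w s == a%:Z %[mod r%:Z])%Z && (w t == w s + 1) =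
  (s == g a%:Z %[mod r%:Z])%Z && (t == s + gap).
Proof.
rewrite (periodic_eqz_mod _ _ wP wK gK); case: (boolP (s == _ %[mod _])%Z) => //=.
rewrite eqz_mod_dvd => /dvdzP [k sk]; have -> : s = g a%:Z + k * r%:Z by lia.
rewrite (periodic_mulz wP) gK (can2_eq wK gK).
have -> : a%:Z + k * r%:Z + 1 = a%:Z + 1 + k * r%:Z by ring.
by rewrite (periodic_mulz gP); congr (t == _); ring.
Qed.

Hypothesis lt_ga : g a%:Z < g (a%:Z + 1).

(* s_a exchanges a + k r and a + 1 + k r and preserves the order of all other
   pairs of values, so composing with it creates exactly one inversion. *)
Lemma inversion_sgen_comp s0 k s t : g a%:Z = s0 + k * r%:Z -> 1 <= s0 <= r%:Z ->
  inversion r (s_gen r a \o w) (s, t) = ((s, t) == (s0, s0 + gap)) || inversion r w (s, t).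
Proof.
move=> ga s0P.
have swapped_lt u v : (u == g a%:Z %[mod r%:Z])%Z && (v == u + gap) -> u < v.
  by case/andP => _ /eqP ->; lia.
have pairE : ((s, t) == (s0, s0 + gap)) =
    (1 <= s <= r%:Z) && ((s == g a%:Z %[mod r%:Z])%Z && (t == s + gap)).
  rewrite xpair_eqE; case: (boolP (1 <= s <= r%:Z)) => sP /=.
    have -> : (s == g a%:Z %[mod r%:Z])%Z = (s == s0).
      by rewrite ga (addrC s0) modzMDl eqz_mod_window.
    by case: eqP => // ->.
  by apply/negbTE; apply: contra sP => /andP [/eqP -> _].
rewrite pairE /inversion /= sgen_ltE // !swapped_pairE.
case: (boolP (_ && (s == t + gap))) => [/swapped_lt lt_ts|_].
  have ge_ts : ~~ (s < t) by rewrite -leNgt ltW.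
  by rewrite (negbTE ge_ts) (contraNF (@swapped_lt s t) ge_ts) !andbF.
case: (boolP (_ && (t == s + gap))) => [sw_st|_]; last by rewrite andbF.
move: (sw_st); rewrite -swapped_pairE => /andP [_ /eqP ->].
by rewrite swapped_lt // (ltNge (w s + 1)) lerDl ler01 !andbF !andbT orbF.
Qed.

Lemma ninv_sgen_comp_lt : ninv r (s_gen r a \o w) = (ninv r w).+1.
Proof.
have [k [s0 [ga s0P]]] := residue_decomp (g a%:Z) r_gt0.
have {}s0P : 1 <= s0%:Z <= r%:Z by lia.
have : (s0%:Z == g a%:Z %[mod r%:Z])%Z && (s0%:Z + gap == s0%:Z + gap).
  by rewrite ga (addrC s0%:Z) modzMDl !eqxx.
rewrite -swapped_pairE => /andP [_ /eqP w_s0].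
have s0_notin : ~~ inversion r w (s0%:Z, s0%:Z + gap).
  by rewrite /inversion /= w_s0 (ltNge (w s0 + 1)) lerDl ler01 !andbF.
have fP : periodic r (s_gen r a \o w) := periodic_comp (sgen_periodic r a) wP.
rewrite /ninv; set f := s_gen r a \o w in fP *.
have /perm_size -> : perm_eq (inversions r f (2 * displacement r f))
    ((s0%:Z, s0%:Z + gap) :: inversions r w (2 * displacement r w)).
  apply: uniq_perm; rewrite /= ?mem_inversions ?s0_notin ?uniq_inversions //.
  by case=> s t; rewrite in_cons !mem_inversions // (inversion_sgen_comp _ _ ga).
by [].
Qed.

End GeneratorInversions.

Lemma ninv_sgen_comp_gt r a w g : (2 <= r)%N -> periodic r w -> cancel w g -> cancel g w ->
  g (a%:Z + 1) < g a%:Z -> (ninv r (s_gen r a \o w)).+1 = ninv r w.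
Proof.
move=> r_ge2 wP wK gK lt_ga; have sK := sgen_involutive a r_ge2.
have swP : periodic r (s_gen r a \o w) := periodic_comp (sgen_periodic r a) wP.
have ssw : s_gen r a \o (s_gen r a \o w) = w by apply: functional_extensionality => x /=.
rewrite -[in RHS]ssw (@ninv_sgen_comp_lt r a (s_gen r a \o w) (g \o s_gen r a)) //.
- by move=> x /=; rewrite sK wK.
- by move=> y /=; rewrite gK sK.
- by rewrite /= sgen_up ?sgen_down ?addrK.
Qed.

Lemma ninv_sgen_comp_le r a w : (0 < r)%N -> periodic r w -> bijective w ->
  (ninv r (s_gen r a \o w) <= (ninv r w).+1)%N.
Proof.
move=> r_gt0 wP [g wK gK]; have [r_ge2|] := leqP 2 r.
  case: (ltgtP (g a%:Z) (g (a%:Z + 1))) => [lt_ga|lt_ga|/(can_inj gK)].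
  - by rewrite (ninv_sgen_comp_lt r_ge2 wP wK gK lt_ga).
  - by rewrite -(ninv_sgen_comp_gt r_ge2 wP wK gK lt_ga) ltnW.
  - lia.
rewrite ltnS => r_le1; have r1 : r = 1%N by apply/eqP; rewrite eqn_leq r_le1.
subst r; rewrite (@eq_ninv _ r_gt0 _ w) //.
- exact: periodic_comp (sgen_periodic 1 a) wP.
- by move=> x y /=; rewrite !sgen1 ltrD2r.
Qed.

Lemma word_affine r js : (0 < r)%N -> affine_perm r (word r js).
Proof.
move=> r_gt0; elim: js => [|j js [IHb IHp]] /=; first by split; [exists id | ].
split; [exact: bij_comp (sgen_bij j r_gt0) IHb | exact: periodic_comp (sgen_periodic r j) IHp].
Qed.

Lemma ninv_word r js : (0 < r)%N -> (ninv r (word r js) <= size js)%N.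
Proof.
move=> r_gt0; elim: js => [|j js IH] /=.
  by rewrite (ninv_eq0 r_gt0 (fun _ => erefl) (@inj_id int)).2.
have [wb wP] := word_affine js r_gt0.
exact: leq_trans (ninv_sgen_comp_le j r_gt0 wP wb) _.
Qed.

Lemma ninv_le_word_length r w k : (0 < r)%N -> has_word_of_length r w k -> (ninv r w <= k)%N.
Proof.
move=> r_gt0 [c [js [<- [_ wE]]]]; have [_ jsP] := word_affine js r_gt0.
rewrite (@eq_ninv _ r_gt0 _ (word r js)) ?ninv_word //.
- by move=> x; rewrite !wE jsP; ring.
- by move=> x y; rewrite !wE ltrD2r.
Qed.

Lemma increasing_shift (w : int -> int) : bijective w -> {homo w : x y / x < y} ->
  forall x, w x = x + w 0.
Proof.
move=> [g wK gK] w_incr; have w_mono := le_mono w_incr.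
(* w (x + 1) lies in (w x, w x + 1], as the preimage of w x + 1 exceeds x. *)
have wS x : w (x + 1) = w x + 1.
  have := w_incr x (x + 1); have := w_mono (x + 1) (g (w x + 1)).
  have := leW_mono w_mono x (g (w x + 1)); rewrite gK; lia.
by move=> x; have := shift_mulz wS 0 x; rewrite add0r !mulr1 addrC.
Qed.

Lemma descent_of_ninv_neq0 r w g : (0 < r)%N -> periodic r w -> cancel w g -> cancel g w ->
  ninv r w != 0%N -> exists2 a : nat, (1 <= a <= r)%N & g (a%:Z + 1) < g a%:Z.
Proof.
move=> r_gt0 wP wK gK nz_w.
have [/hasP [a aP lt_ga]|/hasPn no_descent] :=
  boolP (has (fun a : nat => g (a%:Z + 1) < g a%:Z) (iota 1 r)).
  by exists a => //; rewrite mem_iota in aP; lia.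
have gP := periodic_can wP wK gK.
have g_incr : {homo g : x y / x < y}.
  move=> x y; apply: (chain_ltz lt_trans) => z _.
  have [k [s [-> sP]]] := residue_decomp z r_gt0.
  rewrite addrAC !(periodic_mulz gP) ltrD2r.
  have := no_descent s; rewrite mem_iota => /(_ ltac:(lia)).
  by rewrite -leNgt le_eqVlt => /orP [/eqP /(can_inj gK)|//]; lia.
have w_incr : {homo w : x y / x < y}.
  by move=> x y lt_xy; rewrite -(leW_mono (le_mono g_incr)) !wK.
by move/negP: nz_w; case; apply/eqP/(ninv_eq0 r_gt0 wP (can_inj wK)).
Qed.

Lemma has_word_of_length_ninv r w : (0 < r)%N -> affine_perm r w ->
  has_word_of_length r w (ninv r w).
Proof.
move=> r_gt0 w_aff; have [k wk] : exists k, ninv r w = k by eexists.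
rewrite wk; elim: k w w_aff wk => [|k IH] w [[g wK gK] wP] wk.
  exists (w 0), [::]; split => //; split => // x.
  apply: increasing_shift; first exact: Bijective wK gK.
  exact/(ninv_eq0 r_gt0 wP (can_inj wK)).
have [a aP lt_ga] := descent_of_ninv_neq0 r_gt0 wP wK gK (ltac:(by rewrite wk)).
have r_ge2 : (2 <= r)%N.
  rewrite ltnNge; apply/negP => r_le1; have r1 : r = 1%N by lia.
  by subst r; have : g (a%:Z + 1) = g a%:Z + 1 := periodic_can wP wK gK a%:Z; lia.
have sw_affine : affine_perm r (s_gen r a \o w).
  split; first exact: bij_comp (sgen_bij a r_gt0) (Bijective wK gK).
  exact: periodic_comp (sgen_periodic r a) wP.
have := ninv_sgen_comp_gt r_ge2 wP wK gK lt_ga; rewrite wk => -[/(IH _ sw_affine)].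
case=> c [js [size_js [js_gen swE]]].
(* rho^c s_a = s_b rho^c moves the new generator past the power of rho. *)
have [b bP sbE] := sgen_shift a c r_gt0.
exists c, (b :: js); split; first by rewrite /= size_js.
split; first by rewrite /= js_gen bP.
by move=> x /=; rewrite -sbE -swE /= sgen_involutive.
Qed.

Lemma ell_ninv r w : (0 < r)%N -> affine_perm r w -> ell r w = ninv r w.
Proof.
move=> r_gt0 w_aff; rewrite /ell.
set P := fun k => _ /\ _.
have P_ninv : P (ninv r w).
  by split=> [|k]; [exact: has_word_of_length_ninv | exact: ninv_le_word_length].
have [ell_word ell_min] := epsilon_spec (inhabits 0%N) P (ex_intro _ _ P_ninv).
by apply/eqP; rewrite eqn_leq ell_min ?(ninv_le_word_length r_gt0 ell_word) //; case: P_ninv.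
Qed.

(** * The blocks of lambda and the sequence i_lambda *)

Lemma ivt_nat (f : nat -> int) (x : int) (N : nat) : f 0%N < x <= f N ->
  exists2 i, (i < N)%N & f i < x <= f i.+1.
Proof.
elim: N => [|N IH] xP; first by lia.
have [le_xN|lt_Nx] := leP x (f N); last by exists N => //; lia.
by have [i iN iP] := IH ltac:(lia); exists i => //; lia.
Qed.

Definition psum (lam : int -> nat) (i : nat) : nat := \sum_(1 <= t < i) lam t%:Z.

(* [bstart m] is the paper's lambda_{k,i-1} for m = i + k n with 1 <= i <= n,
   so that R^lambda_m is the interval (bstart m, bstart (m + 1)]. *)
Definition bstart (n r : nat) (lam : int -> nat) (m : int) : int :=
  ((m - 1) %/ n%:Z)%Z * r%:Z + (psum lam `|((m - 1) %% n%:Z)%Z|%N.+1)%:Z.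

Section YoungCoset.
Variables (n r : nat) (lam : int -> nat).
Hypotheses (n_gt0 : (1 <= n)%N) (r_gt0 : (1 <= r)%N) (lamL : in_Lambda n r lam).
Local Notation bstart := (bstart n r lam).

Lemma lam_periodic x k : lam (x + k * n%:Z) = lam x.
Proof.
have lamS y : (lam (y + n%:Z))%:Z = (lam y)%:Z + 0 by rewrite addr0 (proj1 lamL).
by apply/eqP; rewrite -eqz_nat (shift_mulz lamS) mulr0 addr0.
Qed.

Lemma psum_succ i : (1 <= i)%N -> psum lam i.+1 = (psum lam i + lam i%:Z)%N.
Proof. by move=> i_gt0; rewrite /psum big_nat_recr. Qed.

Lemma psum1 : psum lam 1 = 0%N.
Proof. by rewrite /psum big_geq. Qed.

Lemma psum_last : psum lam n.+1 = r.
Proof. exact: proj2 lamL. Qed.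

Lemma bstart_decomp (i : nat) k : (1 <= i <= n)%N ->
  bstart (i%:Z + k * n%:Z) = k * r%:Z + (psum lam i)%:Z.
Proof.
move=> iP; rewrite /bstart (_ : i%:Z + k * n%:Z - 1 = k * n%:Z + (i.-1)%:Z); last by lia.
rewrite divzMDl ?divz_small ?addr0 ?modzMDl ?modz_small; try lia.
by congr (_ + (psum lam _)%:Z); lia.
Qed.

Lemma bstart_succ m : bstart (m + 1) = bstart m + (lam m)%:Z.
Proof.
have [k [i [-> iP]]] := residue_decomp m n_gt0.
rewrite bstart_decomp ?lam_periodic; last by lia.
have [i_lt|i_n] := ltP i n.
  rewrite (_ : _ + 1 = i.+1%:Z + k * n%:Z); last by lia.
  by rewrite bstart_decomp ?psum_succ; lia.
have -> : i = n by lia.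
rewrite (_ : _ + 1 = 1%:Z + (k + 1) * n%:Z) ?bstart_decomp ?psum1; try lia.
by have := psum_succ n_gt0; rewrite psum_last; lia.
Qed.

Lemma bstart_shift m j : bstart (m + j * n%:Z) = bstart m + j * r%:Z.
Proof.
apply: shift_mulz => {}m; have [k [i [-> iP]]] := residue_decomp m n_gt0.
have -> : i%:Z + k * n%:Z + n%:Z = i%:Z + (k + 1) * n%:Z by ring.
by rewrite !bstart_decomp //; ring.
Qed.

Lemma bstart1 : bstart 1 = 0.
Proof. by rewrite -[1]addr0 -(mul0r n%:Z) bstart_decomp ?psum1 //; lia. Qed.

Lemma bstart_last : bstart (n%:Z + 1) = r%:Z.
Proof.
by rewrite -[n%:Z]mul1r addrC bstart_decomp ?psum1 ?mul1r ?addr0 //; lia.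
Qed.

Lemma bstart_homo : {homo bstart : x y / x <= y}.
Proof.
move=> x y; rewrite le_eqVlt => /orP [/eqP -> //|].
by apply: (chain_ltz le_trans) => z _; rewrite bstart_succ lerDl.
Qed.

Lemma inR_bstart m s : inR n r lam m s <-> bstart m < s <= bstart (m + 1).
Proof.
rewrite bstart_succ; split => [[k [i [iP [-> sP]]]]|].
  by rewrite bstart_decomp // lam_periodic /psum; lia.
have [k [i [-> iP]]] := residue_decomp m n_gt0.
rewrite bstart_decomp ?lam_periodic // => sP.
by exists k, i; split => //; split => //; rewrite /psum in sP; lia.
Qed.

Lemma inR_exists x : exists m, inR n r lam m x.
Proof.
have [k [s [-> sP]]] := residue_decomp x r_gt0.
have [i i_lt iP] : exists2 i, (i < n)%N & bstart i.+1%:Z < s%:Z <= bstart i.+2%:Z.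
  apply: (@ivt_nat (fun i => bstart i.+1%:Z)).
  by rewrite bstart1 (_ : n.+1%:Z = n%:Z + 1) ?bstart_last //; lia.
exists (i.+1%:Z + k * n%:Z); apply/inR_bstart.
by rewrite addrAC !bstart_shift (_ : i.+1%:Z + 1 = i.+2%:Z) //; lia.
Qed.

Variable ilam : int -> int.
Hypothesis ilamL : is_ilambda n r lam ilam.

Lemma inR_ilam m x : inR n r lam m x <-> ilam x = m.
Proof.
split; first exact: ilamL.
by move=> <-; have [m0 xm] := inR_exists x; rewrite (ilamL xm).
Qed.

Lemma ilam_bstart x : bstart (ilam x) < x <= bstart (ilam x + 1).
Proof. exact/inR_bstart/inR_ilam. Qed.

Lemma ilamE m x : bstart m < x <= bstart (m + 1) -> ilam x = m.
Proof. by move=> /inR_bstart/inR_ilam. Qed.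

Lemma ilam_homo : {homo ilam : x y / x <= y}.
Proof.
move=> x y le_xy; rewrite leNgt; apply/negP => lt_yx.
have := @bstart_homo (ilam y + 1) (ilam x).
by have := ilam_bstart x; have := ilam_bstart y; lia.
Qed.

Lemma ilam_shift x j : ilam (x + j * r%:Z) = ilam x + j * n%:Z.
Proof.
by apply: ilamE; rewrite addrAC !bstart_shift ltrD2r lerD2r; apply: ilam_bstart.
Qed.

Lemma ilam_window s : (1 <= s <= r%:Z) = (1 <= ilam s <= n%:Z).
Proof.
have := @bstart_homo (ilam s + 1) 1.
have := @bstart_homo (n%:Z + 1) (ilam s).
have := @bstart_homo 1 (ilam s).
have := @bstart_homo (ilam s + 1) (n%:Z + 1).
rewrite bstart1 ?bstart_last //; have := ilam_bstart s.
by move=> *; apply/idP/idP; lia.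
Qed.

Lemma Young_ilam w : in_Young n r lam w -> forall x, ilam (w x) = ilam x.
Proof.
move=> [[_ wP] w_blocks] x; have [k [i [ilam_x iP]]] := residue_decomp (ilam x) n_gt0.
have ilam_x' : ilam (x + (- k) * r%:Z) = i by rewrite ilam_shift ilam_x; ring.
have /inR_ilam := w_blocks i _ iP (proj2 (inR_ilam _ _) ilam_x').
by rewrite periodic_mulz // ilam_shift ilam_x => <-; ring.
Qed.

Lemma ilam_sgen (a : nat) s : (1 <= a < r)%N -> ilam a%:Z = ilam (a%:Z + 1) ->
  1 <= s <= r%:Z -> ilam (s_gen r a s) = ilam s.
Proof.
move=> aP ilam_a sP; have r_ge2 : (2 <= r)%N by lia.
have a_win : 1 <= a%:Z <= r%:Z by lia.
have a1_win : 1 <= a%:Z + 1 <= r%:Z by lia.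
case: (boolP (s == a%:Z %[mod r%:Z])%Z) => [s_a|s_a].
  by rewrite sgen_up //; move: s_a; rewrite eqz_mod_window // => /eqP ->.
case: (boolP (s - 1 == a%:Z %[mod r%:Z])%Z) => [s1_a|s1_a]; last by rewrite sgen_fix.
rewrite sgen_down //; move: s1_a; rewrite -(eqz_modDr 1) subrK eqz_mod_window //.
by move=> /eqP ->; rewrite addrK.
Qed.

Lemma Young_sgen (a : nat) : (1 <= a < r)%N -> ilam a%:Z = ilam (a%:Z + 1) ->
  in_Young n r lam (s_gen r a).
Proof.
move=> aP ilam_a; split; first by split; [exact: sgen_bij | exact: sgen_periodic].
move=> i s iP /inR_ilam ilam_s; apply/inR_ilam.
by rewrite ilam_sgen // ilam_window ilam_s; lia.
Qed.

(* The longest element of S_lambda, reversing every block R^lambda_m. *)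
Definition block_rev x := bstart (ilam x) + bstart (ilam x + 1) + 1 - x.

Lemma ilam_block_rev x : ilam (block_rev x) = ilam x.
Proof. by apply: ilamE; have := ilam_bstart x; rewrite /block_rev; lia. Qed.

Lemma block_rev_involutive : involutive block_rev.
Proof. by move=> x; rewrite {1}/block_rev ilam_block_rev /block_rev; ring. Qed.

Lemma block_rev_periodic : periodic r block_rev.
Proof.
move=> x; have := ilam_shift x 1; rewrite !mul1r /block_rev => ->.
have := bstart_shift (ilam x) 1; have := bstart_shift (ilam x + 1) 1; rewrite !mul1r.
by rewrite addrAC => -> ->; ring.
Qed.

Lemma Young_block_rev : in_Young n r lam block_rev.
Proof.
split; first by split; [exact/inv_bij/block_rev_involutive | exact: block_rev_periodic].
by move=> i s _ /inR_ilam ilam_s; apply/inR_ilam; rewrite ilam_block_rev.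
Qed.

Lemma block_rev_lt x y : ilam x = ilam y -> (block_rev y < block_rev x) = (x < y).
Proof. by move=> ilam_xy; rewrite /block_rev ilam_xy ltrD2l ltrN2. Qed.

(** * The longest element of the coset *)

Variable d : int -> int.
Hypothesis dD : in_D n r lam d.

Let d_affine : affine_perm r d. Proof. by case: dD. Qed.

Lemma in_D_inv_lt_succ g : cancel d g -> cancel g d ->
  forall x, ilam x = ilam (x + 1) -> g x < g (x + 1).
Proof.
move=> dK gK x; have gP := periodic_can d_affine.2 dK gK.
have [k [s [-> sP]]] := residue_decomp x r_gt0.
rewrite addrAC !ilam_shift !(periodic_mulz gP) ltrD2r => /addIr ilam_s.
have s_lt : (s < r)%N.
  rewrite ltn_neqAle; apply/andP; split; last by case/andP: sP.
  have ilam1 : 1 <= ilam 1 <= n%:Z by rewrite -ilam_window; lia.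
  have ilam_r : 1 <= ilam r%:Z <= n%:Z by rewrite -ilam_window; lia.
  apply/eqP => s_r; move: ilam_s; rewrite s_r (addrC r%:Z) -[X in _ + X]mul1r.
  by rewrite ilam_shift mul1r; lia.
case: ltgtP => // [lt_g|/(can_inj gK)]; last by lia.
have r_ge2 : (2 <= r)%N by lia.
have Ys := Young_sgen (a := s) ltac:(lia) ilam_s.
have sd_affine := affine_perm_comp Ys.1 d_affine.
(* s_s lies in S_lambda, so the minimality of d forbids l(s_s d) < l(d). *)
have := dD.2 _ Ys; rewrite (ell_ninv r_gt0 sd_affine) (ell_ninv r_gt0 Ys.1).
rewrite (ell_ninv r_gt0 d_affine).
by have := ninv_sgen_comp_gt r_ge2 d_affine.2 dK gK lt_g; lia.
Qed.

Lemma in_D_inv_increasing_on_blocks g : cancel d g -> cancel g d ->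
  forall x y, x < y -> ilam x = ilam y -> g x < g y.
Proof.
move=> dK gK x y lt_xy ilam_xy; apply: (chain_ltz lt_trans) lt_xy => z zP.
apply: in_D_inv_lt_succ dK gK _ _.
have := @ilam_homo x z; have := @ilam_homo z (z + 1); have := @ilam_homo (z + 1) y; lia.
Qed.

Lemma block_rev_comp_lt s t : s < t ->
  (block_rev (d t) < block_rev (d s)) = (ilam (d t) <= ilam (d s)).
Proof.
move=> lt_st; have [[g dK gK] _] := d_affine.
case: (ltgtP (ilam (d t)) (ilam (d s))) => [lt_ilam|lt_ilam|eq_ilam].
- rewrite ltNge; apply/negP => /ilam_homo; rewrite !ilam_block_rev.
  by rewrite leNgt lt_ilam.
- apply/negP => /ltW /ilam_homo; rewrite !ilam_block_rev.
  by rewrite leNgt lt_ilam.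
rewrite block_rev_lt //; case: ltgtP => // [lt_d|/(can_inj dK)]; last by lia.
by have := in_D_inv_increasing_on_blocks dK gK lt_d eq_ilam; rewrite !dK ltNge ltW.
Qed.

Lemma Young_comp_inversion w p : in_Young n r lam w ->
  inversion r (w \o d) p -> inversion r (block_rev \o d) p.
Proof.
move=> Yw; case: p => s t; rewrite /inversion /= => /and3P [sP lt_st lt_w].
rewrite sP lt_st block_rev_comp_lt //= -(Young_ilam Yw (d t)) -(Young_ilam Yw (d s)).
exact/ilam_homo/ltW.
Qed.

Lemma Inv_inversion p : Inv r (fun k => ilam (d k)) p <-> inversion r (block_rev \o d) p.
Proof.
case: p => s t; rewrite /Inv /inversion /=.
split => [[sP [lt_st le_ilam]]|/and3P [sP lt_st lt_rev]].
  by rewrite sP lt_st block_rev_comp_lt.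
by rewrite -block_rev_comp_lt.
Qed.

Lemma block_rev_comp_affine : affine_perm r (block_rev \o d).
Proof. exact: affine_perm_comp Young_block_rev.1 d_affine. Qed.

Lemma ell_Young_comp_le w : in_Young n r lam w ->
  (ell r (w \o d) <= ell r (block_rev \o d))%N.
Proof.
move=> Yw; have wd_affine := affine_perm_comp Yw.1 d_affine.
rewrite (ell_ninv r_gt0 wd_affine) (ell_ninv r_gt0 block_rev_comp_affine).
apply: (ninv_sub r_gt0 wd_affine.2 block_rev_comp_affine.2).
by move=> p; apply: Young_comp_inversion.
Qed.

Lemma coset_max_block_rev : coset_max n r lam d (block_rev \o d).
Proof.
split; last exact: ell_Young_comp_le.
by exists block_rev; split; first exact: Young_block_rev.
Qed.

Lemma ell_coset_max dp : coset_max n r lam d dp -> ell r dp = ninv r (block_rev \o d).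
Proof.
move=> [[w [Yw dpE]] dp_max]; have {}dpE : dp = w \o d by apply: functional_extensionality.
subst dp; rewrite -(ell_ninv r_gt0 block_rev_comp_affine).
by apply/eqP; rewrite eqn_leq ell_Young_comp_le // dp_max //; exact: Young_block_rev.
Qed.

Lemma has_card_Inv : has_card (Inv r (fun k => ilam (d k))) (ninv r (block_rev \o d)).
Proof.
have [s [s_uniq [sE s_size]]] := has_card_inversion r_gt0 block_rev_comp_affine.2.
exists s; split => //; split => // p.
by split => [/sE/Inv_inversion | /Inv_inversion/sE].
Qed.

End YoungCoset.

Theorem corollary3p2p4 (n r : nat) (lam : int -> nat) (d ilam : int -> int) :
  (1 <= n)%N -> (1 <= r)%N ->
  in_Lambda n r lam -> in_D n r lam d -> is_ilambda n r lam ilam ->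
  let i := fun k => ilam (d k) in
  (exists dp, coset_max n r lam d dp) /\
  forall dp, coset_max n r lam d dp -> has_card (Inv r i) (ell r dp).
Proof.
move=> n_gt0 r_gt0 lamL dD ilamL i; split.
  by eexists; apply: (coset_max_block_rev n_gt0 r_gt0 lamL ilamL dD).
move=> dp /(ell_coset_max n_gt0 r_gt0 lamL ilamL dD) ->.
exact: (has_card_Inv n_gt0 r_gt0 lamL ilamL dD).
Qed.
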